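(* Let $F_1$ and $F_2$ be two rooted general $X$-forests, and let $S$ be a maximal sibling set of $F_2$ such that all labels in $S$ are siblings in $F_1$. For any maximal agreement forest $F$ for $F_1$ and $F_2$, if two labels in $S$ are siblings in $F$, then all labels in $S$ form a maximal sibling set in $F$.
   Context: Let $X$ be a finite label set containing $\rho$. A rooted general $X$-forest is a subgraph of a tree whose leaves are bijectively labeled by $X$, whose unlabeled vertices have degree at least 3, and whose leaf $\rho$ is the root; each component contains a leaf, the component label sets partition $X$, and each component is rooted at $\rho$ if it contains it, otherwise at the lowest common ancestor (in the underlying tree) of its labeled leaves. Forests are taken up to forced contraction (non-root unlabeled degree-2 vertices suppressed, unlabeled vertices of degree $<2$ deleted). $\mathrm{Ord}(F)$ is the number of components; $F'$ is a subforest of $F$ if, up to forced contraction, it is isomorphic (preserving labels and roots) to $F$ with some edges deleted; an agreement forest for $F_1,F_2$ is an $X$-forest that is a subforest of both; it is a maximal agreement forest if no agreement forest $F'$ for $F_1,F_2$ contains it as a subforest with $\mathrm{Ord}(F')<\mathrm{Ord}(F)$. Two leaves are siblings if they have a common parent; a sibling set is a set of leaves that are pairwise siblings; a maximal sibling set is a sibling set $S$ whose common parent $p$ has degree $|S|$ if $p$ has no parent, or $|S|+1$ if $p$ has a parent. *)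

(* Rooted general X-forests, encoded (up to isomorphism and
   forced contraction) by their component partition and their cluster system. *)
From mathcomp Require Import all_boot.
Set Implicit Arguments. Unset Strict Implicit. Unset Printing Implicit Defensive.

Section Forests.
Variables (X : finType) (rho : X).

(* A forest: (blocks, clusters).
   blocks   = the label sets of the components (a partition of X);
   clusters = for every vertex v, the set of labels of its component that are
              descendants of v (v included).  The root leaf rho is the vertex
              whose cluster is its whole block; every other leaf x is the
              vertex with cluster [set x]; unlabelled vertices are the
              remaining clusters. *)
Definition forest := ({set {set X}} * {set {set X}})%type.

Definition blocks (F : forest) := F.1.
Definition clusters (F : forest) := F.2.

Definition rho_block (F : forest) := pblock (blocks F) rho.

Definition is_forest (F : forest) : Prop :=
    [/\ partition (blocks F) [set: X],
      (forall C, C \in clusters F -> exists2 B, B \in blocks F & C \subset B),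
      {subset blocks F <= clusters F},
      (forall x, x != rho -> [set x] \in clusters F) &
      (forall C D, C \in clusters F -> D \in clusters F ->
          [|| C \subset D, D \subset C | [disjoint C & D]])] /\
      (forall C, C \in clusters F -> C != set0) /\
      (* rho is the root leaf of its component: the only vertex whose cluster
         contains rho is rho itself, and rho has exactly one child (if any) *)
      ((forall C, C \in clusters F -> rho \in C -> C = rho_block F) /\
       (rho_block F != [set rho] -> rho_block F :\ rho \in clusters F)).

Definition lv (F : forest) (x : X) : {set X} :=
  if x == rho then rho_block F else [set x].

Definition is_parent (F : forest) (C D : {set X}) : bool :=
  [&& D \in clusters F, C \proper D &
      [forall E : {set X}, ((E \in clusters F) && (C \proper E)) ==> (D \subset E)]].

Definition has_parent (F : forest) (C : {set X}) : bool :=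
  [exists D : {set X}, is_parent F C D].

Definition children (F : forest) (p : {set X}) : {set {set X}} :=
  [set c in clusters F | is_parent F c p].

Definition degree (F : forest) (p : {set X}) : nat :=
  #|children F p| + (if has_parent F p then 1 else 0).

Definition siblings (F : forest) (x y : X) : Prop :=
  exists p, is_parent F (lv F x) p /\ is_parent F (lv F y) p.

Definition sibling_set (F : forest) (S : {set X}) : Prop :=
  forall x y, x \in S -> y \in S -> x != y -> siblings F x y.

Definition max_sibling_set (F : forest) (S : {set X}) : Prop :=
  sibling_set F S /\
  exists p, [/\ p \in clusters F,
                (forall x, x \in S -> is_parent F (lv F x) p) &
                degree F p = (if has_parent F p then #|S| + 1 else #|S|)].

(* Deleting the edge between vertex C and its parent, in the component with
   label set B, followed by forced contraction. *)
Definition del_edge (F : forest) (B C : {set X}) : forest :=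
  ((blocks F :\ B) :|: [set C; B :\: C],
   [set D in clusters F | ~~ (D \subset B)]
   :|: (([set D :&: C | D in [set D in clusters F | D \subset B]]
        :|: [set D :&: (B :\: C) | D in [set D in clusters F | D \subset B]])
        :\ set0)).

(* G is obtained from F by deleting one edge (then forced contraction);
   every edge of F joins a non-root vertex C to its parent. *)
Definition edge_del (F G : forest) : Prop :=
  exists B C, [/\ B \in blocks F, C \in clusters F, C \proper B &
                  G = del_edge F B C].

Inductive subforest : forest -> forest -> Prop :=
| subforest_refl F : subforest F F
| subforest_step F G H : edge_del F G -> subforest H G -> subforest H F.

Definition Ord (F : forest) : nat := #|blocks F|.

Definition agreement_forest (F1 F2 F : forest) : Prop :=
  [/\ is_forest F, subforest F F1 & subforest F F2].

Definition maximal_agreement_forest (F1 F2 F : forest) : Prop :=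
  agreement_forest F1 F2 F /\
  ~ (exists F', [/\ agreement_forest F1 F2 F', subforest F F' & Ord F' < Ord F]).

End Forests.

From mathcomp Require Import all_boot.
Set Implicit Arguments. Unset Strict Implicit. Unset Printing Implicit Defensive.

(* A subforest of a forest F0 is determined by its blocks: its clusters are the
   nonempty traces of the clusters of F0 on those blocks, a form that edge
   deletion preserves.  Let a, b be siblings in a maximal agreement
   forest F of F1, F2, both lying in the block Ka of F, and suppose some c in S
   lies outside Ka.  Since a, b, c hang from the same vertex in both F1 and F2,
   every deletion sequence that keeps a and b together must either keep a and
   c together or cut c off as an isolated leaf; so {c} is a block of F.
   Moving c back into Ka ("relocating" c next to a) yields an agreement forest
   of which F is a one-edge deletion, contradicting maximality.  Hence S lies
   in Ka, and the vertex p :&: Ka of F, where p is the parent of S in F2, has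
   exactly the leaves of S as children. *)

Section Agreement.
Variables (X : finType) (rho : X).
Implicit Types (F G H : forest X) (P Q : {set {set X}}) (A B C D K L E : {set X}).

Definition partn Q := [/\ forall x, exists2 K, K \in Q & x \in K,
  forall K L x, K \in Q -> L \in Q -> x \in K -> x \in L -> K = L &
  set0 \notin Q].

Definition refines P Q := forall K, K \in P -> exists2 B, B \in Q & K \subset B.

Definition restr_cl F0 Q : {set {set X}} :=
  [set D :&: K | D in clusters F0, K in Q] :\ set0.

Definition restrict F0 Q : forest X := (Q, restr_cl F0 Q).

Definition induced F0 G := [/\ partn (blocks G), refines (blocks G) (blocks F0) &
  clusters G = restr_cl F0 (blocks G)].

Definition split_block Q B C : {set {set X}} := (Q :\ B) :|: [set C; B :\: C].

Definition together G x y := exists2 K, K \in blocks G & (x \in K) && (y \in K).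

Lemma partn_partition Q : partn Q -> partition Q [set: X].
Proof.
case=> cov uni n0; apply/and3P; split=> //.
  apply/eqP/setP=> x; rewrite inE; case: (cov x) => K HK xK.
  by apply/bigcupP; exists K.
apply/trivIsetP=> K L HK HL nKL; apply/pred0P=> x /=; apply/negbTE/negP=> /andP [xK xL].
by move/eqP: nKL; apply; apply: uni xK xL.
Qed.

Lemma partition_partn Q : partition Q [set: X] -> partn Q.
Proof.
case/and3P=> /eqP cov tI n0; split=> //.
  move=> x; have : x \in cover Q by rewrite cov inE.
  by case/bigcupP=> K HK xK; exists K.
move=> K L x HK HL xK xL; apply/eqP; apply/negPn/negP=> nKL.
have := trivIsetP tI K L HK HL nKL.
by move/pred0P/(_ x) => /=; rewrite xK xL.
Qed.

Lemma partn_eq Q K L x : partn Q -> K \in Q -> L \in Q -> x \in K -> x \in L -> K = L.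
Proof. by case=> _ u _; apply: u. Qed.

Lemma partn_pblock Q x : partn Q -> pblock Q x \in Q /\ x \in pblock Q x.
Proof.
move=> /partn_partition /and3P [/eqP cov _ _].
by rewrite pblock_mem ?mem_pblock cov inE.
Qed.

Lemma partn_pblockE Q K x : partn Q -> K \in Q -> x \in K -> pblock Q x = K.
Proof.
move=> pQ HK xK; case: (partn_pblock x pQ) => h1 h2.
exact: partn_eq pQ h1 HK h2 xK.
Qed.

Lemma mem_same_block Q C x y : partn Q -> C \in Q ->
  (exists2 K, K \in Q & (x \in K) && (y \in K)) -> x \in C -> y \in C.
Proof.
move=> pQ HC [K HK /andP [xK yK]] xC.
by rewrite (partn_eq pQ HC HK xC xK).
Qed.

Lemma forest_partn F : is_forest rho F -> partn (blocks F).
Proof. by case=> [[pF _ _ _ _] _]; apply: partition_partn. Qed.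

Lemma split_blockP Q B C K :
  reflect [\/ (K \in Q) && (K != B), K = C | K = B :\: C] (K \in split_block Q B C).
Proof.
rewrite /split_block in_setU in_setD1 !inE; apply: (iffP idP).
  case/orP=> [/andP [n h]|/orP [/eqP->|/eqP->]]; last exact: Or33; last exact: Or32.
  by apply: Or31; rewrite h n.
by case=> [/andP [h n]|->|->]; rewrite ?h ?n ?eqxx ?orbT.
Qed.

Lemma partn_split Q B C : partn Q -> B \in Q -> C \subset B -> C != set0 ->
  B :\: C != set0 -> partn (split_block Q B C).
Proof.
move=> pQ HB sCB nC nBC; split.
- move=> x; case: pQ => cov _ _; case: (cov x) => K HK xK.
  case: (eqVneq K B) => [eKB|nKB].
    case: (boolP (x \in C)) => xC; first by exists C => //; apply/split_blockP; apply: Or32.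
    by exists (B :\: C); [apply/split_blockP; apply: Or33 | rewrite inE xC -eKB xK].
  by exists K => //; apply/split_blockP; apply: Or31; rewrite HK nKB.
- have sBC : B :\: C \subset B := subsetDl B C.
  move=> K L x /split_blockP HK /split_blockP HL xK xL.
  case: HK => [/andP [HK nKB]|eK|eK]; case: HL => [/andP [HL nLB]|eL|eL].
  + exact: (partn_eq pQ HK HL xK xL).
  + by move/eqP: nKB; case; apply: (partn_eq pQ HK HB xK); move: xL; rewrite eL; apply/subsetP.
  + by move/eqP: nKB; case; apply: (partn_eq pQ HK HB xK); move: xL; rewrite eL; apply/subsetP.
  + by move/eqP: nLB; case; apply: (partn_eq pQ HL HB xL); move: xK; rewrite eK; apply/subsetP.
  + by rewrite eK eL.
  + by move: xK xL; rewrite eK eL inE => ->.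
  + by move/eqP: nLB; case; apply: (partn_eq pQ HL HB xL); move: xK; rewrite eK; apply/subsetP.
  + by move: xK xL; rewrite eK eL inE => /andP [/negbTE ->].
  + by rewrite eK eL.
- apply/negP=> /split_blockP [/andP [h _]| e | e].
  + by case: pQ => _ _ /negP; apply.
  + by move/eqP: nC; apply; rewrite e.
  + by move/eqP: nBC; apply; rewrite e.
Qed.

Lemma card_split_block Q B C : partn Q -> B \in Q -> C \subset B -> C != set0 ->
  B :\: C != set0 -> #|split_block Q B C| = #|Q|.+1.
Proof.
move=> pQ HB sCB nC nBC.
have e0 : (Q :\ B) :&: [set C; B :\: C] = set0.
  apply/setP=> K; rewrite !inE; apply/negbTE/negP=> /andP [/andP [nKB HK] /orP h].
  have [sKB nK] : K \subset B /\ K != set0.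
    by case: h => /eqP ->; split=> //; apply: subsetDl.
  case/set0Pn: nK => x xK; move/eqP: nKB; apply.
  exact: partn_eq pQ HK HB xK (subsetP sKB x xK).
have nCBC : C != B :\: C.
  apply/negP=> /eqP e; case/set0Pn: nC => x xC.
  by move: (xC); rewrite e inE => /andP [] /negP.
rewrite /split_block cardsU e0 cards0 subn0 cards2 nCBC (cardsD1 B Q) HB.
by rewrite addn2 add1n.
Qed.

Lemma restr_clP F0 Q E : reflect
  (E != set0 /\ exists2 D, D \in clusters F0 & exists2 K, K \in Q & E = D :&: K)
  (E \in restr_cl F0 Q).
Proof.
rewrite /restr_cl in_setD1; apply: (iffP idP).
  case/andP=> nE /imset2P [D K HD HK EDK].
  by split=> //; exists D => //; exists K.
case=> nE [D HD [K HK EDK]].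
by rewrite nE /=; apply/imset2P; rewrite EDK; exact: (Imset2spec HD HK).
Qed.

Lemma restr_cl_neq0 F0 Q E : E \in restr_cl F0 Q -> E != set0.
Proof. by case/restr_clP. Qed.

Lemma restr_clI F0 Q Q' B K E : partn Q -> B \in Q -> K \in Q' -> K \subset B ->
  E \in restr_cl F0 Q -> E \subset B -> E :&: K != set0 -> E :&: K \in restr_cl F0 Q'.
Proof.
move=> pQ HB HK sKB /restr_clP [nE [D HD [L HL eE]]] sEB nEK.
apply/restr_clP; split=> //; exists D => //; exists K => //.
case/set0Pn: nE => x xE.
have eLB : L = B.
  by apply: partn_eq pQ HL HB _ (subsetP sEB x xE); move: xE; rewrite eE inE => /andP [].
by rewrite eE eLB -setIA (setIidPr sKB).
Qed.

Lemma restr_cl_block F0 Q B K E : partn Q -> B \in Q -> K \in Q ->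
  E \in restr_cl F0 Q -> E \subset B -> (K == B) = (E :&: K != set0).
Proof.
move=> pQ HB HK /restr_cl_neq0 /set0Pn [x xE] sEB.
case: (eqVneq K B) => [->|nKB]; first by rewrite (setIidPl sEB); apply/esym/set0Pn; exists x.
apply/esym/negbTE; rewrite negbK; apply/eqP/setP=> y; rewrite !inE.
apply/negbTE/negP=> /andP [yE yK]; move/eqP: nKB; apply.
exact: partn_eq pQ HK HB yK (subsetP sEB y yE).
Qed.

Lemma del_edge_restr_cl F0 G B C : partn (blocks G) -> clusters G = restr_cl F0 (blocks G) ->
  B \in blocks G -> C \subset B ->
  clusters (del_edge G B C) = restr_cl F0 (split_block (blocks G) B C).
Proof.
move=> pG clG HB sCB; have sBC : B :\: C \subset B := subsetDl B C.
have HC : C \in split_block (blocks G) B C by apply/split_blockP; apply: Or32.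
have HBC : B :\: C \in split_block (blocks G) B C by apply/split_blockP; apply: Or33.
have traceB D K : D \in clusters F0 -> K \subset B -> D :&: K != set0 ->
    D :&: K = (D :&: B) :&: K /\ D :&: B \in [set E in clusters G | E \subset B].
  move=> HD sKB nDK; split; first by rewrite -setIA (setIidPr sKB).
  have HDB : D :&: B \in restr_cl F0 (blocks G).
    apply/restr_clP; split; last by exists D => //; exists B.
    by apply: contraNneq nDK => e; rewrite -(setIidPr sKB) setIA e set0I.
  by rewrite inE subsetIr andbT clG.
apply/setP=> E; rewrite [clusters (del_edge _ _ _)]/= in_setU in_setD1 in_setU inE.
apply/idP/idP.
  case/orP=> [/andP [+ nEB]|/andP [nE /orP [|]]].
  - rewrite clG => /restr_clP [nE [D HD [K HK eE]]].
    apply/restr_clP; split=> //; exists D => //; exists K => //.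
    apply/split_blockP; apply: Or31; rewrite HK; apply: contraNneq nEB => eKB.
    by rewrite eE eKB subsetIr.
  - case/imsetP=> E'; rewrite inE clG => /andP [HE' sE'B] eE; rewrite eE in nE *.
    exact: restr_clI pG HB HC sCB HE' sE'B nE.
  - case/imsetP=> E'; rewrite inE clG => /andP [HE' sE'B] eE; rewrite eE in nE *.
    exact: restr_clI pG HB HBC sBC HE' sE'B nE.
case/restr_clP=> nE [D HD [K /split_blockP HK eE]].
case: HK => [/andP [HK nKB]|eK|eK].
- have HE : E \in restr_cl F0 (blocks G) by apply/restr_clP; split=> //; exists D => //; exists K.
  rewrite clG HE /=; apply/orP; left; apply: contra nE => sEB.
  have sEK : E \subset K by rewrite eE subsetIr.
  move: (restr_cl_block pG HK HB HE sEK).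
  by rewrite eq_sym (negbTE nKB) (setIidPl sEB) => /esym/negbFE.
- rewrite nE /=; apply/orP; right; apply/orP; left.
  have nDK : D :&: C != set0 by rewrite -eK -eE.
  have [eDK HDB] := traceB D C HD sCB nDK.
  by apply/imsetP; exists (D :&: B); rewrite // eE eK eDK.
- rewrite nE /=; apply/orP; right; apply/orP; right.
  have nDK : D :&: (B :\: C) != set0 by rewrite -eK -eE.
  have [eDK HDB] := traceB D (B :\: C) HD sBC nDK.
  by apply/imsetP; exists (D :&: B); rewrite // eE eK eDK.
Qed.

Lemma induced_refl F0 : is_forest rho F0 -> induced F0 F0.
Proof.
move=> fF; have pF := forest_partn fF.
case: fF => [[_ csub _ _ _] [cn0 _]].
split=> //; first by move=> K HK; exists K.
apply/setP=> E; apply/idP/restr_clP.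
  move=> HE; split; first exact: cn0.
  case: (csub E HE) => B HB sEB; exists E => //; exists B => //.
  by apply/esym/setIidPl.
case=> nE [D HD [K HK EDK]].
case: (csub D HD) => B HB sDB.
case/set0Pn: nE => x; rewrite EDK inE => /andP [xD xK].
have eBK : B = K by apply: (partn_eq pF HB HK) (subsetP sDB x xD) xK.
by rewrite -eBK (setIidPl sDB).
Qed.

Lemma induced_edge_del F0 G G' : induced F0 G -> edge_del G G' -> induced F0 G'.
Proof.
case=> pG rG clG [B [C [HB HC pCB ->]]].
have sCB := proper_sub pCB.
have nC : C != set0 by move: HC; rewrite clG => /restr_cl_neq0.
have nBC : B :\: C != set0.
  by case/properP: pCB => _ [x xB xC]; apply/set0Pn; exists x; rewrite inE xC xB.
split.
- exact: partn_split.
- move=> K /split_blockP [/andP [HK _]|eK|eK]; first exact: rG.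
  + by case: (rG B HB) => B' HB' sBB'; exists B'; rewrite // eK (subset_trans sCB).
  + by case: (rG B HB) => B' HB' sBB'; exists B'; rewrite // eK (subset_trans (subsetDl B C)).
- exact: del_edge_restr_cl.
Qed.

Lemma induced_subforest F0 G H : induced F0 G -> subforest H G -> induced F0 H.
Proof.
move=> iG sHG; elim: sHG iG => // F G' H' eFG _ IH iF.
exact: IH (induced_edge_del iF eFG).
Qed.

Lemma restrict_blocks F0 G : induced F0 G -> restrict F0 (blocks G) = G.
Proof. by case: G => Q Cl [_ _ /= e]; rewrite /restrict /= -e. Qed.

Lemma cluster_of_block F0 G B C : induced F0 G -> B \in blocks G -> C \in clusters G ->
  C \subset B -> exists2 D, D \in clusters F0 & C = D :&: B.
Proof.
case=> pG _ clG HB; rewrite clG => /restr_clP [n [D HD [K HK eC]]] sCB.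
exists D => //; case/set0Pn: n => x xC.
have xK : x \in K by move: xC; rewrite eC inE => /andP [].
by rewrite (partn_eq pG HB HK (subsetP sCB x xC) xK).
Qed.

Lemma together_subforest G H x y : subforest H G -> together H x y -> together G x y.
Proof.
elim=> // F G' H' [B [C [HB HC pCB eG]]] _ IH /IH [K HK /andP [xK yK]].
move: HK; rewrite eG => /split_blockP [/andP [HK _]|eK|eK].
- by exists K => //; rewrite xK yK.
- exists B => //; rewrite eK in xK yK.
  by rewrite (subsetP (proper_sub pCB) x xK) (subsetP (proper_sub pCB) y yK).
- exists B => //; rewrite eK !inE in xK yK.
  by case/andP: xK => _ ->; case/andP: yK => _ ->.
Qed.

Lemma disjoint_pointwise A B : (forall x, x \in A -> x \in B -> False) -> [disjoint A & B].
Proof.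
move=> h; rewrite -setI_eq0; apply/eqP/setP=> y; rewrite !inE.
by apply/negbTE/negP=> /andP [ya yb]; apply: (h y).
Qed.

Lemma restr_cl_laminar F0 Q C E : partn Q ->
  (forall C D, C \in clusters F0 -> D \in clusters F0 ->
     [|| C \subset D, D \subset C | [disjoint C & D]]) ->
  C \in restr_cl F0 Q -> E \in restr_cl F0 Q ->
  [|| C \subset E, E \subset C | [disjoint C & E]].
Proof.
move=> pQ lam /restr_clP [_ [D HD [K HK ->]]] /restr_clP [_ [D' HD' [L HL ->]]].
case: (eqVneq K L) => [<-|nKL].
  case/or3P: (lam D D' HD HD') => h.
  + by rewrite setSI.
  + by rewrite orbC setSI.
  + apply/orP; right; apply/orP; right; apply: disjoint_pointwise => y.
    rewrite !inE => /andP [yD _] /andP [yD' _].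
    by move/pred0P/(_ y): h => /=; rewrite yD yD'.
apply/orP; right; apply/orP; right; apply: disjoint_pointwise => y.
rewrite !inE => /andP [_ yK] /andP [_ yL].
by move/eqP: nKL; apply; apply: partn_eq pQ HK HL yK yL.
Qed.

Lemma restrict_forest F0 P : is_forest rho F0 -> partn P -> refines P (blocks F0) ->
  is_forest rho (restrict F0 P).
Proof.
move=> fF pP rP; have pF := forest_partn fF.
case: fF => [[_ csub bsub sing lam] [cn0 [rh1 rh2]]].
set B0 := rho_block rho F0.
have [HK0 rK0] := partn_pblock rho pP.
have sK0 : pblock P rho \subset B0.
  case: (rP _ HK0) => B HB sKB.
  by rewrite /B0 /rho_block (partn_pblockE pF HB (subsetP sKB _ rK0)).
rewrite /is_forest /rho_block /blocks /clusters /=.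
split; [split|split; [|split]].
- exact: partn_partition.
- by move=> C /restr_clP [_ [D _ [K HK ->]]]; exists K => //; apply: subsetIr.
- move=> K HK; apply/restr_clP; split.
    by apply/negP=> /eqP e; case: pP => _ _ /negP; apply; rewrite -e.
  case: (rP K HK) => B HB sKB; exists B; first exact: bsub.
  by exists K => //; apply/esym/setIidPr.
- move=> x nx; apply/restr_clP; split; first by apply/set0Pn; exists x; rewrite inE.
  exists [set x]; first exact: sing.
  have [h1 h2] := partn_pblock x pP; exists (pblock P x) => //.
  by apply/esym/setIidPl; rewrite sub1set.
- by move=> C E; apply: restr_cl_laminar.
- exact: restr_cl_neq0.
- move=> C /restr_clP [_ [D HD [K HK ->]]]; rewrite inE => /andP [rD rK].
  have eD : D = B0 := rh1 D HD rD.
  by rewrite eD; rewrite (partn_pblockE pP HK rK) in sK0 *; apply/setIidPr.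
- move=> nK0; apply/restr_clP; split.
    apply/negP=> /eqP h; move/eqP: nK0; apply; apply/eqP; rewrite eqEsubset sub1set rK0 andbT.
    apply/subsetP=> y yK; rewrite inE; apply/negPn/negP=> ny.
    by move/setP/(_ y): h; rewrite !inE ny yK.
  have nB0 : B0 != [set rho].
    apply/negP=> /eqP e; move/eqP: nK0; apply; apply/eqP.
    by rewrite eqEsubset sub1set rK0 andbT -e.
  exists (B0 :\ rho); first exact: rh2.
  exists (pblock P rho) => //; apply/setP=> y; rewrite !inE.
  by case: (boolP (y \in pblock P rho)) => yK; rewrite ?andbF // (subsetP sK0 y yK) !andbT.
Qed.

Lemma parent1P F x p : is_parent F [set x] p ->
  [/\ p \in clusters F, x \in p, p != [set x] &
      forall D, D \in clusters F -> x \in D -> D != [set x] -> p \subset D].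
Proof.
case/and3P=> Hp; rewrite properEneq => /andP [n s] /forallP h.
split=> //; first by rewrite -sub1set.
  by rewrite eq_sym.
move=> D HD xD nD; move/implyP: (h D); apply; rewrite HD properEneq eq_sym nD /=.
by rewrite sub1set.
Qed.

Lemma lv_neq_rho F x : x != rho -> lv rho F x = [set x].
Proof. by move=> nx; rewrite /lv (negbTE nx). Qed.

Lemma parent_neq_rho F x p : is_forest rho F -> is_parent F (lv rho F x) p -> x != rho.
Proof.
move=> fF; apply: contraTneq => ->; rewrite /lv eqxx.
have pF := forest_partn fF.
case: fF => [_ [_ [rh1 _]]].
apply/negP; case/and3P=> Hp pr _.
have rB : rho \in rho_block rho F by case: (partn_pblock rho pF).
have := rh1 p Hp (subsetP (proper_sub pr) _ rB) => e.
by move: pr; rewrite e properE subxx andbF.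
Qed.

Lemma parent_together F x y p : is_forest rho F ->
  is_parent F [set x] p -> is_parent F [set y] p -> together F x y.
Proof.
case=> [[_ csub _ _ _] _] /parent1P [Hp xp _ _] /parent1P [_ yp _ _].
case: (csub p Hp) => K HK sK; exists K => //.
by rewrite (subsetP sK x xp) (subsetP sK y yp).
Qed.

Lemma exists_child F D p : is_forest rho F -> p \in clusters F -> D \in clusters F ->
  D \proper p -> exists2 M, (M \in clusters F) && is_parent F M p & D \subset M.
Proof.
move=> fF Hp HD pDp.
case: (fF) => [[_ _ _ _ lam] [cn0 _]].
pose Pr := fun M : {set X} => [&& M \in clusters F, D \subset M & M \proper p].
have PD : Pr D by rewrite /Pr HD subxx pDp.
case: (arg_maxnP (fun M : {set X} => #|M|) PD) => M /and3P [HM sDM pMp] hmax.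
exists M => //; rewrite HM /=; apply/and3P; split=> //.
apply/forallP=> E; apply/implyP=> /andP [HE pME].
case/or3P: (lam E p HE Hp) => [sEp|//|dEp].
  case: (eqVneq E p) => [-> //|nEp].
  have PE : Pr E by rewrite /Pr HE (subset_trans sDM (proper_sub pME)) properEneq nEp sEp.
  have h : #|E| <= #|M| := hmax E PE.
  by move: (proper_card pME); rewrite ltnNge h.
case/set0Pn: (cn0 D HD) => x xD.
have xE := subsetP (proper_sub pME) x (subsetP sDM x xD).
have xp := subsetP (proper_sub pMp) x (subsetP sDM x xD).
by move/pred0P/(_ x): dEp => /=; rewrite xE xp.
Qed.

(* In tree terms: c is a child of the lowest common ancestor of a and b. *)
Definition triple_closed F a b c : Prop :=
  [/\ together F a c,
      forall D, D \in clusters F -> a \in D -> b \in D -> c \in D &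
      forall D, D \in clusters F -> c \in D -> D != [set c] -> (a \in D) && (b \in D)].

Lemma sibling_triple F a b c q q' : is_forest rho F -> a != b ->
  is_parent F [set a] q -> is_parent F [set c] q ->
  is_parent F [set a] q' -> is_parent F [set b] q' -> triple_closed F a b c.
Proof.
move=> fF nab qa qc q'a q'b; split; first exact: parent_together qa qc.
  case/parent1P: qa => Hq aq _ hqa; case/parent1P: qc => _ cq _ _.
  move=> D HD aD bD; apply: (subsetP (hqa D HD aD _)) cq.
  by apply/negP=> /eqP e; move: bD; rewrite e inE eq_sym (negbTE nab).
case/parent1P: qa => Hq aq nqa _; case/parent1P: qc => _ _ _ hqc.
case/parent1P: q'a => _ _ _ hq'a; case/parent1P: q'b => _ bq' _ _.
move=> D HD cD nD; have sqD := hqc D HD cD nD.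
have sq'q := hq'a q Hq aq nqa.
by rewrite (subsetP sqD a aq) (subsetP sqD b (subsetP sq'q b bq')).
Qed.

Section Relocation.
Variables (a c : X).

Definition reloc K := (K :\ c) :|: (if a \in K then [set c] else set0).
Definition reloc_part Q := [set reloc K | K in Q] :\ set0.

Lemma in_reloc K y : (y \in reloc K) = if y == c then a \in K else y \in K.
Proof.
rewrite /reloc in_setU in_setD1. case: (eqVneq y c) => [->|ny].
  by case: (a \in K); rewrite ?inE ?eqxx.
by case: (a \in K); rewrite ?inE ?orbF ?ny //= (negbTE ny) ?orbF.
Qed.

Lemma relocD B C : reloc (B :\: C) = reloc B :\: reloc C.
Proof. by apply/setP=> y; rewrite !(in_reloc, inE); case: (y == c); rewrite ?inE. Qed.

Lemma relocS C B : C \subset B -> reloc C \subset reloc B.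
Proof.
move=> sCB; apply/subsetP=> y; rewrite !in_reloc; case: (y == c); exact: (subsetP sCB).
Qed.

Lemma reloc_inj Q K L : partn Q -> K \in Q -> L \in Q ->
  reloc K = reloc L -> reloc K != set0 -> K = L.
Proof.
move=> pQ HK HL e /set0Pn [y yK]; have yL : y \in reloc L by rewrite -e.
move: yK yL; rewrite !in_reloc; case: (y == c) => yK yL; exact: partn_eq pQ HK HL yK yL.
Qed.

Lemma reloc_partP Q K' :
  reflect (K' != set0 /\ exists2 K, K \in Q & K' = reloc K) (K' \in reloc_part Q).
Proof.
rewrite /reloc_part in_setD1; apply: (iffP andP) => [[n /imsetP [K HK e]]|[n [K HK e]]].
  by split=> //; exists K.
by split=> //; apply/imsetP; exists K.
Qed.

Lemma partn_reloc Q : partn Q -> partn (reloc_part Q).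
Proof.
move=> pQ; split.
- move=> x; case: pQ => cov _ _.
  case: (eqVneq x c) => [->|nx].
    case: (cov a) => K HK aK; exists (reloc K); last by rewrite in_reloc eqxx.
    apply/reloc_partP; split; last by exists K.
    by apply/set0Pn; exists c; rewrite in_reloc eqxx.
  case: (cov x) => K HK xK; exists (reloc K); last by rewrite in_reloc (negbTE nx).
  apply/reloc_partP; split; last by exists K.
  by apply/set0Pn; exists x; rewrite in_reloc (negbTE nx).
- move=> K' L' x /reloc_partP [_ [K HK ->]] /reloc_partP [_ [L HL ->]]; rewrite !in_reloc.
  by case: (x == c) => xK xL; rewrite (partn_eq pQ HK HL xK xL).
- by rewrite /reloc_part !inE eqxx.
Qed.

Lemma reloc_split_trivial Q B C : partn Q -> B \in Q -> C \subset B ->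
  (reloc C = set0 \/ reloc (B :\: C) = set0) -> reloc_part (split_block Q B C) = reloc_part Q.
Proof.
move=> pQ HB sCB h.
have e1 : reloc C = set0 -> reloc (B :\: C) = reloc B by move=> e; rewrite relocD e setD0.
have e2 : reloc (B :\: C) = set0 -> reloc C = reloc B.
  move=> e; have : reloc (B :\: (B :\: C)) = reloc B by rewrite relocD e setD0.
  by rewrite setDDr setDv set0U (setIidPr sCB).
apply/setP=> K'; apply/reloc_partP/reloc_partP => [[n [K /split_blockP HK eK]]|[n [K HK eK]]].
  split=> //; case: HK => [/andP [HK _]|e|e]; first by exists K.
  + exists B => //; rewrite eK e; case: h => h; first by move: n; rewrite eK e h eqxx.
    exact: e2.
  + exists B => //; rewrite eK e; case: h => h; last by move: n; rewrite eK e h eqxx.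
    exact: e1.
split=> //; case: (eqVneq K B) => [eKB|nKB].
  case: h => h.
    by exists (B :\: C); [apply/split_blockP; apply: Or33 | rewrite eK eKB e1].
  by exists C; [apply/split_blockP; apply: Or32 | rewrite eK eKB e2].
by exists K => //; apply/split_blockP; apply: Or31; rewrite HK nKB.
Qed.

Lemma reloc_split Q B C : partn Q -> B \in Q -> C \subset B ->
  reloc C != set0 -> reloc (B :\: C) != set0 ->
  reloc_part (split_block Q B C) = split_block (reloc_part Q) (reloc B) (reloc C).
Proof.
move=> pQ HB sCB nC nBC.
apply/setP=> K'; apply/reloc_partP/idP => [[n [K /split_blockP HK eK]]|/split_blockP HK'].
  apply/split_blockP; case: HK => [/andP [HK nKB]|e|e].
  + apply: Or31; apply/andP; split; first by apply/reloc_partP; split=> //; exists K.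
    apply/eqP=> e; move/eqP: nKB; apply; apply: reloc_inj pQ HK HB _ _; rewrite -eK //.
  + by apply: Or32; rewrite eK e.
  + by apply: Or33; rewrite eK e relocD.
case: HK' => [/andP [/reloc_partP [n [K HK eK]] nK]|e|e].
- split=> //; exists K => //; apply/split_blockP; apply: Or31; rewrite HK /=.
  by apply: contraNneq nK => e; rewrite eK e.
- by split; [rewrite e | exists C => //; apply/split_blockP; apply: Or32].
- split; first by rewrite e -relocD.
  by exists (B :\: C); [apply/split_blockP; apply: Or33 | rewrite e relocD].
Qed.

End Relocation.

Lemma reloc_with a c K : a \in K -> reloc a c K = c |: K.
Proof. by move=> aK; apply/setP=> y; rewrite in_reloc !inE; case: (y == c). Qed.

Lemma reloc_set1 a c : a != c -> reloc a c [set c] = set0.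
Proof.
move=> ac; apply/setP=> y; rewrite in_reloc !inE; case: (eqVneq y c) => [_|nyc] //.
exact: negbTE.
Qed.

Lemma reloc_id a c K : a \notin K -> c \notin K -> reloc a c K = K.
Proof.
move=> aK cK; apply/setP=> y; rewrite in_reloc; case: (eqVneq y c) => [->|] //.
by rewrite (negbTE aK) (negbTE cK).
Qed.

Lemma reloc_part_id Q a c : partn Q ->
  (exists2 K, K \in Q & (a \in K) && (c \in K)) -> reloc_part a c Q = Q.
Proof.
move=> pQ [Ka HKa /andP [aK cK]].
have gid K : K \in Q -> reloc a c K = K.
  move=> HK; case: (eqVneq K Ka) => [->|nK].
    by rewrite reloc_with //; apply/setUidPr; rewrite sub1set.
  by apply: reloc_id; apply/negP=> h; move/eqP: nK; apply; exact: partn_eq pQ HK HKa h _.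
apply/setP=> K; apply/reloc_partP/idP => [[_ [K' HK' ->]]|HK]; first by rewrite gid.
split; last by exists K => //; rewrite gid.
by apply/negP=> /eqP e; case: pQ => _ _ /negP; apply; rewrite -e.
Qed.

Lemma refines_reloc F0 P a c : partn (blocks F0) -> refines P (blocks F0) ->
  together F0 a c -> refines (reloc_part a c P) (blocks F0).
Proof.
move=> pF rP [Bac HBac /andP [aB cB]] K' /reloc_partP [_ [K HK ->]].
case: (rP K HK) => B HB sKB; exists B => //; apply/subsetP=> y; rewrite in_reloc.
case: eqP => [-> aK|_]; last exact: (subsetP sKB).
by rewrite -(partn_eq pF HBac HB aB (subsetP sKB a aK)).
Qed.

Section RelocationSubforest.
Variables (a b c : X) (F0 : forest X).
Hypothesis Hac : a != c.
Hypothesis ab_c : forall D, D \in clusters F0 -> a \in D -> b \in D -> c \in D.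
Hypothesis c_ab :
  forall D, D \in clusters F0 -> c \in D -> D != [set c] -> (a \in D) && (b \in D).

Lemma reloc_restr_cl D B C : D \in clusters F0 -> C = D :&: B -> reloc a c C != set0 ->
  (a \in C -> b \in C) -> reloc a c C = D :&: reloc a c B.
Proof.
move=> HD eC nC abC; apply/setP=> y; rewrite in_setI !in_reloc.
case: (eqVneq y c) => [->|ny]; last by rewrite eC inE.
apply/idP/idP.
  move=> aC; have bC := abC aC; move: aC bC; rewrite eC !inE => /andP [aD aB] /andP [bD _].
  by rewrite (ab_c HD aD bD) aB.
case/andP=> cD aB; rewrite eC inE aB andbT; apply/negPn/negP=> naD.
have eD : D = [set c].
  by apply/eqP; apply/negPn/negP=> nD; case/andP: (c_ab HD cD nD) => aD _; rewrite aD in naD.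
move/eqP: nC; apply; apply/setP=> z; rewrite in_reloc eC eD !inE.
case: (eqVneq z c) => [_|nz]; last by rewrite andFb.
by apply/negbTE/negP=> /andP [/eqP eac _]; move: Hac; rewrite eac eqxx.
Qed.

Lemma subforest_reloc G H : induced F0 G -> subforest H G -> together H a b ->
  subforest (restrict F0 (reloc_part a c (blocks H))) (restrict F0 (reloc_part a c (blocks G))).
Proof.
move=> iG sHG; elim: sHG iG => [F _ _|F G' H' eFG sHG' IH iF tab]; first exact: subforest_refl.
have iG' := induced_edge_del iF eFG.
have tG' : together G' a b := together_subforest sHG' tab.
have := IH iG' tab; case: eFG => [B [C [HB HC pCB eG']]].
have sCB := proper_sub pCB.
case: (iF) => pF _ _.
have bG' : blocks G' = split_block (blocks F) B C by rewrite eG'.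
rewrite bG'.
case: (boolP ((reloc a c C != set0) && (reloc a c (B :\: C) != set0))) => [/andP [nC nBC]|h].
  rewrite reloc_split // => sub; apply: subforest_step sub.
  case: (cluster_of_block iF HB HC sCB) => D HD eC.
  have pG' : partn (split_block (blocks F) B C) by case: iG'; rewrite bG'.
  have abC : a \in C -> b \in C.
    apply: (mem_same_block pG'); first by apply/split_blockP; apply: Or32.
    by rewrite -bG'.
  have egC := reloc_restr_cl HD eC nC abC.
  have HrB : reloc a c B \in reloc_part a c (blocks F).
    apply/reloc_partP; split; last by exists B.
    by apply: contraNneq nC => e; apply/eqP; apply/eqP; rewrite -subset0 -e relocS.
  have srCB : reloc a c C \subset reloc a c B by rewrite egC subsetIr.
  exists (reloc a c B), (reloc a c C); split=> //.
  - by apply/restr_clP; split=> //; exists D => //; exists (reloc a c B).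
  - rewrite properEneq srCB andbT; apply: contraNneq nBC => e.
    by rewrite relocD e setDv.
  - rewrite [RHS]surjective_pairing; congr pair.
    set G0 := restrict F0 (reloc_part a c (blocks F)).
    exact/esym/(@del_edge_restr_cl F0 G0 _ _ (partn_reloc a c pF) (erefl _) HrB srCB).
rewrite reloc_split_trivial //.
by move: h; rewrite negb_and !negbK => /orP [/eqP|/eqP]; [left|right].
Qed.

Lemma together_or_isolated G H : induced F0 G -> subforest H G -> together H a b ->
  (together G a c \/ [set c] \in blocks G) -> (together H a c \/ [set c] \in blocks H).
Proof.
move=> iG sHG; elim: sHG iG => [F _ _ //|F G' H' eFG sHG' IH iF tab hF].
have iG' := induced_edge_del iF eFG.
have tG' : together G' a b := together_subforest sHG' tab.
apply: (IH iG' tab); case: eFG => [B [C [HB HC pCB eG']]].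
have sCB := proper_sub pCB.
case: (iF) => pF _ clF.
have nC : C != set0 by move: HC; rewrite clF => /restr_cl_neq0.
have bG' : blocks G' = split_block (blocks F) B C by rewrite eG'.
have pG' : partn (split_block (blocks F) B C) by case: iG'; rewrite bG'.
rewrite /together bG'.
case: hF => [[K HK /andP [aK cK]]|hc].
  case: (eqVneq K B) => [eKB|nKB]; last first.
    by left; exists K; [apply/split_blockP; apply: Or31; rewrite HK nKB | rewrite aK cK].
  rewrite eKB in aK cK.
  case: (cluster_of_block iF HB HC sCB) => D HD eC.
  have abC : a \in C -> b \in C.
    apply: (mem_same_block pG'); first by apply/split_blockP; apply: Or32.
    by move: tG'; rewrite /together bG'.
  case: (boolP (a \in C)) => aC; case: (boolP (c \in C)) => cC.
  - by left; exists C; [apply/split_blockP; apply: Or32 | rewrite aC cC].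
  - have bC := abC aC; move: aC bC cC; rewrite eC !inE => /andP [aD _] /andP [bD _].
    by rewrite (ab_c HD aD bD) cK.
  - have cD : c \in D by move: cC; rewrite eC inE => /andP [].
    have eD : D = [set c].
      apply/eqP; apply/negPn/negP=> nD; case/andP: (c_ab HD cD nD) => aD _.
      by move: aC; rewrite eC inE aD aK.
    right; apply/split_blockP; apply: Or32; rewrite eC eD.
    by apply/setP=> z; rewrite !inE; case: (eqVneq z c) => [->|] //; rewrite cK.
  - by left; exists (B :\: C); [apply/split_blockP; apply: Or33 | rewrite !inE aC cC aK cK].
right; apply/split_blockP; apply: Or31; rewrite hc /=.
apply/eqP=> e; move: pCB; rewrite -e properEneq => /andP [nCc].
rewrite subset1 (negbTE nCc) /= => /eqP e0; by move/eqP: nC.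
Qed.

End RelocationSubforest.

Lemma reloc_subforest F0 F a b c : is_forest rho F0 -> subforest F F0 ->
  together F a b -> a != c -> triple_closed F0 a b c ->
  subforest (restrict F0 (reloc_part a c (blocks F))) F0.
Proof.
move=> fF0 sF tab nac [tac ab_c c_ab].
have := subforest_reloc nac ab_c c_ab (induced_refl fF0) sF tab.
by rewrite (reloc_part_id (forest_partn fF0) tac) (restrict_blocks (induced_refl fF0)).
Qed.

Lemma singleton_block F0 F a b c Ka : is_forest rho F0 -> subforest F F0 ->
  triple_closed F0 a b c ->
  Ka \in blocks F -> a \in Ka -> b \in Ka -> c \notin Ka -> [set c] \in blocks F.
Proof.
move=> fF0 sF [tac ab_c c_ab] HKa aK bK cK.
have tab : together F a b by exists Ka => //; rewrite aK bK.
case: (together_or_isolated ab_c c_ab (induced_refl fF0) sF tab (or_introl tac)) => //.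
case=> K HK /andP [aK' cK'].
have iF := induced_subforest (induced_refl fF0) sF; case: iF => pF' _ _.
by move: cK; rewrite -(partn_eq pF' HK HKa aK' aK) cK'.
Qed.

Section RelocationBlocks.
Variables (a b c : X) (P : {set {set X}}) (Ka : {set X}).
Hypotheses (pP : partn P) (HKa : Ka \in P) (aK : a \in Ka) (bK : b \in Ka)
  (cK : c \notin Ka) (Hc : [set c] \in P).

Lemma ac_ne : a != c.
Proof. by apply: contraNneq cK => <-. Qed.

Lemma notin_other_block K : K \in P -> K != Ka -> K != [set c] -> (a \notin K) && (c \notin K).
Proof.
move=> HK n1 n2; apply/andP; split; apply/negP=> h.
  by move/eqP: n1; apply; apply: partn_eq pP HK HKa h aK.
by move/eqP: n2; apply; apply: partn_eq pP HK Hc h _; rewrite inE.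
Qed.

Lemma mem_reloc_part K' :
  (K' \in reloc_part a c P) = (K' == c |: Ka) || [&& K' \in P, K' != Ka & K' != [set c]].
Proof.
apply/reloc_partP/idP => [[n [K HK eK]]|].
  rewrite eK in n *.
  case: (eqVneq K Ka) => [->|n1]; first by rewrite reloc_with // eqxx.
  case: (eqVneq K [set c]) => [e|n2]; first by move: n; rewrite e (reloc_set1 ac_ne); move/eqP.
  by case/andP: (notin_other_block HK n1 n2) => h1 h2; rewrite reloc_id // HK n1 n2 orbT.
case/orP=> [/eqP ->|/and3P [HK n1 n2]].
  split; first by apply/set0Pn; exists c; rewrite !inE eqxx.
  by exists Ka => //; rewrite reloc_with.
split; first by apply/negP=> /eqP e; case: pP => _ _ /negP; apply; rewrite -e.
by exists K' => //; case/andP: (notin_other_block HK n1 n2) => h1 h2; rewrite reloc_id.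
Qed.

Lemma split_reloc : split_block (reloc_part a c P) (c |: Ka) [set c] = P.
Proof.
apply/setP=> K; apply/split_blockP/idP; rewrite setU1K //.
  case=> [/andP [h n]|->|->] //.
  by move: h; rewrite mem_reloc_part (negbTE n) /= => /and3P [].
move=> HK; case: (eqVneq K Ka) => [->|n1]; first exact: Or33.
case: (eqVneq K [set c]) => [->|n2]; first exact: Or32.
apply: Or31; rewrite mem_reloc_part HK n1 n2 orbT /=.
apply/negP=> /eqP e; case/andP: (notin_other_block HK n1 n2) => _ /negP; apply.
by rewrite e !inE eqxx.
Qed.

Lemma card_reloc_part : #|P| = #|reloc_part a c P|.+1.
Proof.
have HcK : c |: Ka \in reloc_part a c P by rewrite mem_reloc_part eqxx.
rewrite -{1}split_reloc card_split_block //.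
- exact: partn_reloc.
- by rewrite sub1set setU11.
- by apply/set0Pn; exists c; rewrite inE.
- by rewrite setU1K //; apply/set0Pn; exists a.
Qed.

Definition attach E := if (a \in E) && (b \in E) then c |: E else E.

Section Traces.
Variable F0 : forest X.
Hypothesis ab_c : forall D, D \in clusters F0 -> a \in D -> b \in D -> c \in D.
Hypothesis c_ab :
  forall D, D \in clusters F0 -> c \in D -> D != [set c] -> (a \in D) && (b \in D).
Hypothesis Hcc : [set c] \in clusters F0.

Lemma restr_cl_reloc_attach Z : Z \in restr_cl F0 (reloc_part a c P) ->
  exists2 E, E \in restr_cl F0 P & Z = attach E.
Proof.
case/restr_clP=> nX [D HD [K' HK' eX]].
move: HK'; rewrite mem_reloc_part => /orP [/eqP eK'|/and3P [HK n1 n2]].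
  case: (eqVneq (D :&: Ka) set0) => [e0|/set0Pn nE].
    exists [set c]; last first.
      rewrite /attach !inE (negbTE ac_ne) /=.
      apply/eqP; rewrite eqEsubset; apply/andP; split.
        apply/subsetP=> y; rewrite eX eK' !inE => /andP [yD /orP [//|yK]].
        by move/setP/(_ y): e0; rewrite !inE yD yK.
      rewrite sub1set; case/set0Pn: nX => y; rewrite eX eK' !inE => /andP [yD].
      case: (eqVneq y c) => [eyc|nyc] /=; first by rewrite -eyc yD eqxx.
      by move=> yK; move/setP/(_ y): e0; rewrite !inE yD yK.
    apply/restr_clP; split; first by apply/set0Pn; exists c; rewrite inE.
    by exists [set c] => //; exists [set c] => //; rewrite setIid.
  exists (D :&: Ka).
    by apply/restr_clP; split; [apply/set0Pn | exists D => //; exists Ka].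
  rewrite /attach !inE aK bK !andbT eX eK'.
  case: (boolP (c \in D)) => cD.
    have nD : D != [set c].
      apply/negP=> /eqP eD; case: nE => y; rewrite eD !inE => /andP [/eqP -> h].
      by move: cK; rewrite h.
    case/andP: (c_ab HD cD nD) => -> -> /=.
    by apply/setP=> y; rewrite !inE; case: (eqVneq y c) => [->|]; rewrite ?cD.
  case: (boolP ((a \in D) && (b \in D))) => [/andP [aD bD]|_].
    by move: cD; rewrite (ab_c HD aD bD).
  by apply/setP=> y; rewrite !inE; case: (eqVneq y c) => [->|]; rewrite ?(negbTE cD).
case/andP: (notin_other_block HK n1 n2) => aK' cK'.
exists Z; last first.
  rewrite /attach; suff -> : (a \in Z) = false by [].
  by apply/negbTE; apply: contra aK'; rewrite eX inE => /andP [].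
by apply/restr_clP; split=> //; exists D => //; exists K'.
Qed.

Lemma attach_restr_cl E : E \in restr_cl F0 P -> attach E \in restr_cl F0 (reloc_part a c P).
Proof.
case/restr_clP=> nE [D HD [K HK eE]]; rewrite /attach.
have HcK : c |: Ka \in reloc_part a c P by rewrite mem_reloc_part eqxx.
case: (eqVneq K Ka) => [eK|n1].
  case: (boolP ((a \in E) && (b \in E))) => [/andP [aE bE]|nab] /=.
    have cD : c \in D.
      by move: aE bE; rewrite eE !inE => /andP [aD _] /andP [bD _]; apply: ab_c.
    apply/restr_clP; split; first by apply/set0Pn; exists c; rewrite !inE eqxx.
    exists D => //; exists (c |: Ka) => //.
    by rewrite eE eK; apply/setP=> y; rewrite !inE; case: (eqVneq y c) => [->|]; rewrite ?cD.
  apply/restr_clP; split=> //; exists D => //; exists (c |: Ka) => //.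
  have cD : c \notin D.
    apply/negP=> cD.
    have nD : D != [set c].
      apply/negP=> /eqP eD; case/set0Pn: nE => y; rewrite eE eK eD !inE => /andP [/eqP -> h].
      by move: cK; rewrite h.
    case/andP: (c_ab HD cD nD) => aD bD; move: nab; rewrite eE eK !inE aD bD aK bK.
    by [].
  by rewrite eE eK; apply/setP=> y; rewrite !inE; case: (eqVneq y c) => [->|]; rewrite ?(negbTE cD).
case: (eqVneq K [set c]) => [eK|n2].
  have eE1 : E = [set c].
    apply/eqP; rewrite eqEsubset; apply/andP; split; first by rewrite eE eK subsetIr.
    case/set0Pn: nE => y; rewrite eE eK !inE => /andP [yD /eqP ey]; rewrite ey in yD.
    by rewrite sub1set !inE yD eqxx.
  rewrite eE1 in_set1 (negbTE ac_ne) /=.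
  apply/restr_clP; split; first by apply/set0Pn; exists c; rewrite inE.
  exists [set c] => //; exists (c |: Ka) => //.
  by apply/setP=> y; rewrite !inE; case: (eqVneq y c) => [->|] //; rewrite andbF.
case/andP: (notin_other_block HK n1 n2) => aK' cK'.
have -> : (a \in E) = false.
  by apply/negbTE; apply: contra aK'; rewrite eE inE => /andP [].
apply/restr_clP; split=> //; exists D => //; exists K => //.
by rewrite mem_reloc_part HK n1 n2 orbT.
Qed.

Lemma restr_cl_reloc : restr_cl F0 (reloc_part a c P) = [set attach E | E in restr_cl F0 P].
Proof.
apply/setP=> Z; apply/idP/imsetP; first exact: restr_cl_reloc_attach.
by case=> E HE ->; apply: attach_restr_cl.
Qed.

End Traces.

Lemma restr_cl_reloc_eq F0 F0' :
  triple_closed F0 a b c -> triple_closed F0' a b c ->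
  [set c] \in clusters F0 -> [set c] \in clusters F0' ->
  restr_cl F0 P = restr_cl F0' P ->
  restr_cl F0 (reloc_part a c P) = restr_cl F0' (reloc_part a c P).
Proof.
move=> [_ ab_c c_ab] [_ ab_c' c_ab'] Hcc Hcc' eP.
by rewrite (restr_cl_reloc ab_c c_ab Hcc) (restr_cl_reloc ab_c' c_ab' Hcc') eP.
Qed.

End RelocationBlocks.

Lemma edge_del_reloc F0 F a c Ka : induced F0 F -> [set c] \in clusters F0 ->
  Ka \in blocks F -> a \in Ka -> c \notin Ka -> [set c] \in blocks F ->
  edge_del (restrict F0 (reloc_part a c (blocks F))) F.
Proof.
move=> iF Hcc HKa aK cK Hc; have [pP _ _] := iF.
set F' := restrict F0 (reloc_part a c (blocks F)).
have HcK : c |: Ka \in blocks F' by rewrite [_ \in _](mem_reloc_part pP HKa aK cK Hc) eqxx.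
have sCB : [set c] \subset c |: Ka by rewrite sub1set setU11.
exists (c |: Ka), [set c]; split=> //.
- apply/restr_clP; split; first by apply/set0Pn; exists c; rewrite inE.
  by exists [set c] => //; exists (c |: Ka) => //; apply/esym/setIidPl.
- rewrite properEneq sCB andbT; apply/negP=> /eqP e.
  by move: (setU1r c aK); rewrite -e inE (negbTE (ac_ne aK cK)).
have eB : split_block (blocks F') (c |: Ka) [set c] = blocks F := split_reloc pP HKa aK cK Hc.
have eC := @del_edge_restr_cl F0 F' _ _ (partn_reloc a c pP) (erefl _) HcK sCB.
rewrite eB in eC; rewrite -[LHS](restrict_blocks iF) [RHS]surjective_pairing.
by congr pair; [exact: esym eB | exact: esym eC].
Qed.

Lemma reloc_agreement F1 F2 F a b c Ka : is_forest rho F1 -> is_forest rho F2 ->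
  agreement_forest rho F1 F2 F -> c != rho ->
  triple_closed F1 a b c -> triple_closed F2 a b c ->
  Ka \in blocks F -> a \in Ka -> b \in Ka -> c \notin Ka ->
  exists F', [/\ agreement_forest rho F1 F2 F', subforest F F' & Ord F' < Ord F].
Proof.
move=> fF1 fF2 [fF sF1 sF2] nc T1 T2 HKa aK bK cK.
have iF1 := induced_subforest (induced_refl fF1) sF1.
have iF2 := induced_subforest (induced_refl fF2) sF2.
have [pP rP clF1] := iF1; have [_ _ clF2] := iF2.
have nac := ac_ne aK cK.
have tab : together F a b by exists Ka => //; rewrite aK bK.
have Hc := singleton_block fF1 sF1 T1 HKa aK bK cK.
have cl1 : [set c] \in clusters F1 by case: fF1 => [[_ _ _ sing _] _]; apply: sing.
have cl2 : [set c] \in clusters F2 by case: fF2 => [[_ _ _ sing _] _]; apply: sing.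
have eF12 : restrict F2 (reloc_part a c (blocks F)) = restrict F1 (reloc_part a c (blocks F)).
  congr pair; apply: (restr_cl_reloc_eq pP HKa aK bK cK Hc T2 T1 cl2 cl1).
  by rewrite -clF1 -clF2.
exists (restrict F1 (reloc_part a c (blocks F))); split.
- split.
  + apply: (restrict_forest fF1 (partn_reloc a c pP)).
    by case: T1 => tac _ _; apply: refines_reloc (forest_partn fF1) rP tac.
  + exact: reloc_subforest fF1 sF1 tab nac T1.
  + by rewrite -eF12; exact: reloc_subforest fF2 sF2 tab nac T2.
- exact: subforest_step (edge_del_reloc iF1 cl1 HKa aK cK Hc) (subforest_refl _).
- by rewrite /Ord [#|blocks F|](card_reloc_part pP HKa aK cK Hc).
Qed.

Lemma max_agreement_sibling_block F1 F2 F (S : {set X}) p a b Ka :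
  is_forest rho F1 -> is_forest rho F2 -> maximal_agreement_forest rho F1 F2 F ->
  rho \notin S -> (forall x, x \in S -> is_parent F2 [set x] p) -> sibling_set rho F1 S ->
  a \in S -> b \in S -> a != b -> Ka \in blocks F -> a \in Ka -> b \in Ka -> S \subset Ka.
Proof.
move=> fF1 fF2 [aF maxF] nrho parS sib1 aS bS nab HKa aK bK.
have nrhoS x : x \in S -> x != rho by move=> xS; apply: contraNneq nrho => <-.
apply/subsetP=> c cS; apply/negPn/negP=> cK.
have nac : a != c by apply: contraNneq cK => <-.
have [q [qa qc]] := sib1 a c aS cS nac.
have [q' [q'a q'b]] := sib1 a b aS bS nab.
rewrite !lv_neq_rho ?nrhoS // in qa qc q'a q'b.
have T1 := sibling_triple fF1 nab qa qc q'a q'b.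
have T2 := sibling_triple fF2 nab (parS a aS) (parS c cS) (parS a aS) (parS b bS).
by apply: maxF; apply: reloc_agreement fF1 fF2 aF (nrhoS c cS) T1 T2 HKa aK bK cK.
Qed.

Lemma children_max_sibling F (S : {set X}) p : is_forest rho F -> rho \notin S ->
  (forall x, x \in S -> is_parent F [set x] p) ->
  degree F p = (if has_parent F p then #|S| + 1 else #|S|) ->
  children F p = [set [set x] | x in S].
Proof.
case=> [[_ _ _ sing _] _] nrho parS degS.
apply/esym/eqP; rewrite eqEcard; apply/andP; split.
  apply/subsetP=> Y /imsetP [x xS ->]; rewrite /children inE (parS x xS) andbT.
  by apply: sing; apply: contraNneq nrho => <-.
rewrite card_imset; last exact: set1_inj.
move: degS; rewrite /degree; case: (has_parent F p).
  by move=> /eqP; rewrite eqn_add2r => /eqP ->.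
by rewrite addn0 => ->.
Qed.

Section SiblingsInBlock.
Variables (F2 F : forest X) (S p Ka : {set X}) (a b : X).
Hypotheses (fF2 : is_forest rho F2) (iF : induced F2 F).
Hypotheses (HKa : Ka \in blocks F) (SK : S \subset Ka).
Hypotheses (aS : a \in S) (bS : b \in S) (nab : a != b).
Hypothesis parS : forall x, x \in S -> is_parent F2 [set x] p.

Lemma parent_block_restr x : x \in S -> is_parent F [set x] (p :&: Ka).
Proof.
have [pP _ clF] := iF.
have pK y : y \in S -> y \in p by move=> yS; case/parent1P: (parS yS).
have Hp : p \in clusters F2 by case/parent1P: (parS aS).
move=> xS; apply/and3P; split.
- rewrite clF; apply/restr_clP; split; last by exists p => //; exists Ka.
  by apply/set0Pn; exists a; rewrite inE pK // (subsetP SK).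
- rewrite properEneq sub1set in_setI pK // (subsetP SK) // !andbT.
  apply/negP=> /eqP e.
  have : a \in [set x] by rewrite e inE pK // (subsetP SK).
  have : b \in [set x] by rewrite e inE pK // (subsetP SK).
  by rewrite !inE => /eqP eb /eqP ea; move: nab; rewrite ea eb eqxx.
apply/forallP=> E; apply/implyP=> /andP [HE]; rewrite properEneq sub1set => /andP [nE xE].
move: HE; rewrite clF => /restr_clP [_ [D HD [K HK eE]]].
have xK : x \in K by move: xE; rewrite eE inE => /andP [].
have xD : x \in D by move: xE; rewrite eE inE => /andP [].
have eK : K = Ka := partn_eq pP HK HKa xK (subsetP SK x xS).
have nD : D != [set x].
  apply/negP=> /eqP eD; move: nE; rewrite eE eD eq_sym; apply/negP/negPn/eqP.
  by apply/setIidPl; rewrite sub1set.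
case/parent1P: (parS xS) => _ _ _ h.
by rewrite eE eK; apply: setSI; apply: h.
Qed.

Lemma child_block_restr E : children F2 p = [set [set x] | x in S] ->
  E \in children F (p :&: Ka) -> exists2 x, x \in S & E = [set x].
Proof.
have [pP _ clF] := iF.
have Hp : p \in clusters F2 by case/parent1P: (parS aS).
have [[_ _ _ _ lam2] _] := fF2.
move=> chF2; rewrite /children inE => /andP [HE /and3P [_ pE _]].
move: HE; rewrite clF => /restr_clP [nE [D HD [K HK eE]]].
case/set0Pn: (nE) => y yE.
have /setIP [yp yKa] : y \in p :&: Ka := subsetP (proper_sub pE) y yE.
have /setIP [yD yK] : y \in D :&: K by rewrite -eE.
have eK : K = Ka := partn_eq pP HK HKa yK yKa.
case/or3P: (lam2 D p HD Hp) => [sDp|spD|dDp].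
- case: (eqVneq D p) => [eDp|nDp].
    by move: pE; rewrite eE eK eDp properE subxx andbF.
  have pDp : D \proper p by rewrite properEneq nDp sDp.
  have [M /andP [HM parM] sDM] := exists_child fF2 Hp HD pDp.
  have : M \in children F2 p by rewrite /children inE HM parM.
  rewrite chF2 => /imsetP [z zS eM].
  have eD : D = [set z].
    move: sDM; rewrite eM subset1 => /orP [/eqP //|/eqP e0].
    by move: yD; rewrite e0 inE.
  by exists z => //; rewrite eE eK eD; apply/setIidPl; rewrite sub1set (subsetP SK).
- move: pE; rewrite properE => /andP [_ /negP]; case.
  by rewrite eE eK; apply: setSI.
- by move/pred0P/(_ y): dDp => /=; rewrite yD yp.
Qed.

Lemma children_block_restr : is_forest rho F -> rho \notin S ->
  children F2 p = [set [set x] | x in S] ->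
  children F (p :&: Ka) = [set [set x] | x in S].
Proof.
case=> [[_ _ _ sing _] _] nrho chF2; apply/setP=> E; apply/idP/imsetP.
  exact: child_block_restr.
case=> x xS ->; rewrite /children inE parent_block_restr // sing //.
by apply: contraNneq nrho => <-.
Qed.

End SiblingsInBlock.

End Agreement.

Theorem lemma4p5 (X : finType) (rho : X) (F1 F2 : forest X) (S : {set X}) :
  is_forest rho F1 -> is_forest rho F2 ->
  max_sibling_set rho F2 S ->
  sibling_set rho F1 S ->
  forall F : forest X,
    maximal_agreement_forest rho F1 F2 F ->
    (exists a b, [/\ a \in S, b \in S, a != b & siblings rho F a b]) ->
    max_sibling_set rho F S.
Proof.
move=> fF1 fF2 [_ [p [_ parS degS]]] sib1 F maxF [a [b [aS bS nab [p' [pa pb]]]]].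
have nrho : rho \notin S.
  by apply/negP=> rS; move/negP: (parent_neq_rho fF2 (parS rho rS)); rewrite eqxx.
have nrhoS x : x \in S -> x != rho by move=> xS; apply: contraNneq nrho => <-.
have parS' x : x \in S -> is_parent F2 [set x] p.
  by move=> xS; rewrite -(lv_neq_rho F2 (nrhoS x xS)); apply: parS.
have [[fF _ sF2] _] := maxF.
rewrite !lv_neq_rho ?nrhoS // in pa pb.
have [Ka HKa /andP [aK bK]] := parent_together fF pa pb.
have SK := max_agreement_sibling_block fF1 fF2 maxF nrho parS' sib1 aS bS nab HKa aK bK.
have iF := induced_subforest (induced_refl fF2) sF2.
have parF := parent_block_restr iF HKa SK aS bS nab parS'.
have chF := children_block_restr fF2 iF HKa SK aS bS nab parS' fF nrho
  (children_max_sibling fF2 nrho parS' degS).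
split=> [x y xS yS _|]; first by exists (p :&: Ka); rewrite !lv_neq_rho ?nrhoS ?parF.
exists (p :&: Ka); split; first by case/parent1P: (parF a aS).
  by move=> x xS; rewrite lv_neq_rho ?nrhoS ?parF.
rewrite /degree chF card_imset; last exact: set1_inj.
by case: has_parent; rewrite ?addn0.
Qed.
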